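(* For every function $f:\mathcal X\times\mathcal Y\to\mathcal Z$ and $\epsilon,\delta\in(0,1)$, $\mathrm{srec}_{\epsilon,\delta}(f)=\max_\mu \mathrm{srec}^\mu_{\epsilon,\delta}(f)$, where the maximum is over probability distributions $\mu$ on $\mathcal X\times\mathcal Y$.
   Context: A rectangle is $A\times B$ with $A\subseteq\mathcal X,B\subseteq\mathcal Y$. For $z\in\mathcal Z$, $\mathrm{srec}^z_{\epsilon,\delta}(f)$ is the optimal value of the LP: minimize $\sum_R w_R$ over $w_R\ge 0$ (one variable per rectangle $R$) subject to $\sum_{R\ni(x,y)}w_R\ge1-\epsilon$ for all $(x,y)\in f^{-1}(z)$; $\sum_{R\ni(x,y)}w_R\le\delta$ for all $(x,y)\notin f^{-1}(z)$; $\sum_{R\ni(x,y)}w_R\le1$ for all $(x,y)$. $\mathrm{srec}_{\epsilon,\delta}(f)=\max_z\mathrm{srec}^z_{\epsilon,\delta}(f)$. For a nonnegative function $\mu$ on $\mathcal X\times\mathcal Y$, write $\mu_z(R)=\mu(R\cap f^{-1}(z))$ and $\mu_z=\mu_z(\mathcal X\times\mathcal Y)$. $\mathrm{srec}^{z,\mu}_{\epsilon,\delta}(f)$ is the optimal value of the LP: minimize $\sum_R w_R$ over $w_R\ge0$ subject to the covering constraint $\sum_{(x,y)\in f^{-1}(z)}\mu(x,y)\sum_{R\ni(x,y)}w_R\ge(1-\epsilon)\mu_z$, the packing constraints $\sum_{R\ni(x,y)}w_R\le\delta$ for all $(x,y)\notin f^{-1}(z)$, and $\sum_{R\ni(x,y)}w_R\le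 1$ for all $(x,y)$. $\mathrm{srec}^\mu_{\epsilon,\delta}(f)=\max_z\mathrm{srec}^{z,\mu}_{\epsilon,\delta}(f)$. *)

From HB Require Import structures.
From mathcomp Require Import all_boot all_order all_algebra.
Set Implicit Arguments. Unset Strict Implicit. Unset Printing Implicit Defensive.
Import Order.TTheory GRing.Theory Num.Theory.
Local Open Scope ring_scope.

Section Srec.
Variables (R : realFieldType) (X Y Z : finType).

Definition rect := ({set X} * {set Y})%type.

Definition weights := {ffun rect -> R}.

Definition cov (w : weights) (x : X) (y : Y) : R :=
  \sum_(Rc : rect | (x \in Rc.1) && (y \in Rc.2)) w Rc.

Definition cost (w : weights) : R := \sum_(Rc : rect) w Rc.

Definition lp_opt (P : weights -> Prop) (v : R) : Prop :=
  (exists2 w, P w & cost w = v) /\ (forall w, P w -> v <= cost w).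

Definition feas_z (f : X -> Y -> Z) (eps delta : R) (z : Z) (w : weights) : Prop :=
  [/\ forall Rc, 0 <= w Rc,
      forall x y, f x y = z -> 1 - eps <= cov w x y,
      forall x y, f x y <> z -> cov w x y <= delta
    & forall x y, cov w x y <= 1].

Definition feas_zmu (f : X -> Y -> Z) (eps delta : R) (mu : {ffun X * Y -> R})
    (z : Z) (w : weights) : Prop :=
  [/\ forall Rc, 0 <= w Rc,
      \sum_(p : X * Y | f p.1 p.2 == z) mu p * cov w p.1 p.2
        >= (1 - eps) * \sum_(p : X * Y | f p.1 p.2 == z) mu p,
      forall x y, f x y <> z -> cov w x y <= delta
    & forall x y, cov w x y <= 1].

Definition srec_z f eps delta z v := lp_opt (feas_z f eps delta z) v.
Definition srec_zmu f eps delta mu z v := lp_opt (feas_zmu f eps delta mu z) v.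

Definition max_over_z (P : Z -> R -> Prop) (v : R) : Prop :=
  (exists z, P z v) /\ (forall z u, P z u -> u <= v).

Definition srec f eps delta v := max_over_z (srec_z f eps delta) v.
Definition srec_mu f eps delta mu v := max_over_z (srec_zmu f eps delta mu) v.

Definition is_distr (mu : {ffun X * Y -> R}) : Prop :=
  (forall p, 0 <= mu p) /\ \sum_p mu p = 1.

Definition max_over_distr f eps delta v : Prop :=
  (exists2 mu, is_distr mu & srec_mu f eps delta mu v) /\
  (forall mu u, is_distr mu -> srec_mu f eps delta mu u -> u <= v).

End Srec.

(* For every distribution mu, srec^{z,mu} only asks the mu-average of the covering
   constraints of srec^z, so srec^mu <= srec.  Conversely, take z maximizing srec^z and an
   optimal dual certificate of its LP: a nonnegative combination of the constraints whose
   variable part is minus the cost.  Its covering part is a nonnegative combination of the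
   pointwise covering constraints; normalizing these weights gives a distribution mu whose
   averaged covering constraint, together with the remaining constraints, still certifies
   the bound srec^z, hence srec^{z,mu} = srec^z.  Over an arbitrary ordered field, the
   existence of optima and of the dual certificate come from Fourier-Motzkin elimination. *)

From HB Require Import structures.
From mathcomp Require Import all_boot all_order all_algebra.
From mathcomp Require Import ring lra.
Import Order.TTheory GRing.Theory Num.Theory.
Local Open Scope ring_scope.
Set Implicit Arguments. Unset Strict Implicit. Unset Printing Implicit Defensive.

Section Cone.
Variables (R : numDomainType) (V : lmodType R).

Inductive cone (L : seq V) : V -> Prop :=
| cone0 : cone L 0
| cone_mem c : c \in L -> cone L c
| coneD a b : cone L a -> cone L b -> cone L (a + b)
| coneZ k a : 0 <= k -> cone L a -> cone L (k *: a).

Lemma cone_trans (L L' : seq V) e :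
  {in L', forall c, cone L c} -> cone L' e -> cone L e.
Proof.
move=> hL'; elim=> {e} [|c /hL'|a b _ ha _ hb|k a k0 _ ha] //.
- exact: cone0.
- exact: coneD.
- exact: coneZ.
Qed.

Lemma cone_cons h L e : cone (h :: L) e ->
  exists2 k, 0 <= k & exists2 u, cone L u & e = u + k *: h.
Proof.
elim=> {e} [|c|a b _ [ka ka0 [ua ca ->]] _ [kb kb0 [ub cb ->]]|k a k0 _ [ka ka0 [ua ca ->]]].
- by exists 0 => //; exists 0; rewrite ?scale0r ?addr0 //; exact: cone0.
- rewrite inE => /predU1P [->|cL].
    by exists 1 => //; exists 0; rewrite ?scale1r ?add0r //; exact: cone0.
  by exists 0 => //; exists c; rewrite ?scale0r ?addr0 //; exact: cone_mem.
- exists (ka + kb); first exact: addr_ge0.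
  by exists (ua + ub); [exact: coneD | rewrite scalerDl addrACA].
- exists (k * ka); first exact: mulr_ge0.
  by exists (k *: ua); [exact: coneZ | rewrite scalerDr scalerA].
Qed.

Lemma cone_cat L1 L2 e : cone (L1 ++ L2) e ->
  exists2 e1, cone L1 e1 & exists2 e2, cone L2 e2 & e = e1 + e2.
Proof.
elim=> {e} [|c|a b _ [a1 ca1 [a2 ca2 ->]] _ [b1 cb1 [b2 cb2 ->]]|k a k0 _ [a1 ca1 [a2 ca2 ->]]].
- by exists 0; [exact: cone0 | exists 0; rewrite ?addr0 //; exact: cone0].
- rewrite mem_cat => /orP [cL|cL].
    by exists c; [exact: cone_mem | exists 0; rewrite ?addr0 //; exact: cone0].
  by exists 0; [exact: cone0 | exists c; rewrite ?add0r //; exact: cone_mem].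
- exists (a1 + b1); first exact: coneD.
  by exists (a2 + b2); [exact: coneD | rewrite addrACA].
- exists (k *: a1); first exact: coneZ.
  by exists (k *: a2); [exact: coneZ | rewrite scalerDr].
Qed.

Lemma cone_image (T : finType) (P : {pred T}) (g : T -> V) e :
  cone [seq g t | t in P] e ->
  exists nu : T -> R, [/\ forall t, 0 <= nu t, forall t, t \notin P -> nu t = 0
                        & e = \sum_t nu t *: g t].
Proof.
elim=> {e} [|c|a b _ [na [na0 naP ->]] _ [nb [nb0 nbP ->]]|k a k0 _ [na [na0 naP ->]]].
- by exists (fun=> 0); split=> //; rewrite big1 // => t _; rewrite scale0r.
- case/mapP=> t0; rewrite mem_enum => Pt0 ->.
  exists (fun t => (t == t0)%:R); split=> [t|t|].
  + exact: ler0n.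
  + by case: eqP => // ->; rewrite Pt0.
  + rewrite (bigD1 t0) //= eqxx scale1r big1 ?addr0 // => t /negbTE ->.
    by rewrite scale0r.
- exists (fun t => na t + nb t); split=> [t|t tP|].
  + exact: addr_ge0.
  + by rewrite naP ?nbP ?addr0.
  + by rewrite -big_split; apply: eq_bigr => t _; rewrite scalerDl.
- exists (fun t => k * na t); split=> [t|t tP|].
  + exact: mulr_ge0.
  + by rewrite naP ?mulr0.
  + by rewrite scaler_sumr; apply: eq_bigr => t _; rewrite scalerA.
Qed.

End Cone.

Section ConeLinear.
Variables (R : numDomainType) (V W : lmodType R).

Lemma cone_linear (F : V -> W) L e :
  (forall k a b, F (k *: a + b) = k *: F a + F b) -> cone L e -> cone (map F L) (F e).
Proof.
move=> linF; have F0 : F 0 = 0.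
  by have := linF (-1) 0 0; rewrite scaler0 addr0 scaleN1r addNr.
have FD a b : F (a + b) = F a + F b by have := linF 1 a b; rewrite !scale1r.
have FZ k a : F (k *: a) = k *: F a by rewrite -[k *: a]addr0 linF F0 addr0.
elim=> {e} [|c cL|a b _ ha _ hb|k a k0 _ ha].
- by rewrite F0; exact: cone0.
- by apply: cone_mem; exact: map_f.
- by rewrite FD; exact: coneD.
- by rewrite FZ; exact: coneZ.
Qed.

End ConeLinear.

Section SeqExtrema.
Variable R : realDomainType.

Lemma seq_argmax (T : eqType) (s : seq T) (F : T -> R) :
  s != [::] -> exists2 a, a \in s & {in s, forall b, F b <= F a}.
Proof.
elim: s => [//|a [|b s] IH _].
  by exists a; rewrite ?mem_head // => b; rewrite mem_seq1 => /eqP ->.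
have [c cs hc] := IH isT.
have [ac|ca] := leP (F a) (F c).
  exists c; first by rewrite inE cs orbT.
  by move=> d; rewrite inE => /predU1P [->|/hc].
exists a; first exact: mem_head.
by move=> d; rewrite inE => /predU1P [->//|/hc dc]; exact: le_trans dc (ltW ca).
Qed.

Lemma exists_between (lo up : seq R) : {in lo & up, forall a b, a <= b} ->
  exists t, {in lo, forall a, a <= t} /\ {in up, forall b, t <= b}.
Proof.
move=> hlu; have [lo0|] := eqVneq lo [::].
  have [->|] := eqVneq up [::]; first by exists 0; rewrite lo0.
  move=> /(seq_argmax -%R) [b bu hb]; exists b; rewrite lo0; split=> // c cu.
  by rewrite -lerN2; exact: hb.
move=> /(seq_argmax id) [a alo ha]; exists a; split=> // b bu.
exact: hlu.
Qed.

End SeqExtrema.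

Section FourierMotzkin.
Variables (R : realFieldType) (J : finType).

(* The constraint c stands for the inequality \sum_j c (Some j) * x j <= c None;
   its coefficients are taken in R^o so that constraints form an R-vector space. *)
Definition constraint := {ffun option J -> R^o}.

Implicit Types (a b c e p n : constraint) (L : seq constraint) (x : J -> R).

Definition lhs (x : J -> R) (c : constraint) : R := \sum_j c (Some j) * x j.
Definition sat x c := lhs x c <= c None.
Definition sat_all x (L : seq constraint) := {in L, forall c, sat x c}.

Lemma scale_coord k c o : (k *: c) o = k * c o.
Proof. by rewrite ffunE. Qed.

Lemma lhsD x a b : lhs x (a + b) = lhs x a + lhs x b.
Proof. by rewrite /lhs -big_split; apply: eq_bigr => j _; rewrite ffunE mulrDl. Qed.

Lemma lhsZ x k a : lhs x (k *: a) = k * lhs x a.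
Proof. by rewrite /lhs mulr_sumr; apply: eq_bigr => j _; rewrite ffunE mulrA. Qed.

Lemma lhs0 x : lhs x 0 = 0.
Proof. by rewrite /lhs big1 // => j _; rewrite ffunE mul0r. Qed.

Lemma lhs_single (s : J) x c : (forall j, j != s -> c (Some j) = 0) ->
  lhs x c = c (Some s) * x s.
Proof. by move=> hc; rewrite /lhs (bigD1 s) //= big1 ?addr0 // => j /hc ->; rewrite mul0r. Qed.

Lemma sat_ffun x c : sat [ffun j => x j] c = sat x c.
Proof. by rewrite /sat /lhs; congr (_ <= _); apply: eq_bigr => j _; rewrite ffunE. Qed.

Lemma sat_all_cat x L1 L2 : sat_all x (L1 ++ L2) <-> sat_all x L1 /\ sat_all x L2.
Proof.
split=> [h|[h1 h2] c]; last by rewrite mem_cat => /orP [/h1|/h2].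
by split=> c cL; apply: h; rewrite mem_cat cL ?orbT.
Qed.

Lemma sat_all_cons x c L : sat_all x (c :: L) <-> sat x c /\ sat_all x L.
Proof.
split=> [h|[h1 h2] d]; last by rewrite inE => /predU1P [->|/h2].
by split=> [|d dL]; apply: h; rewrite inE ?eqxx ?dL ?orbT.
Qed.

Lemma sat_all_image x (T : finType) (P : {pred T}) (g : T -> constraint) :
  sat_all x [seq g t | t in P] <-> {in P, forall t, sat x (g t)}.
Proof.
split=> [h t tP|h c /mapP [t]]; last by rewrite mem_enum => /h hx ->.
by apply: h; apply: map_f; rewrite mem_enum.
Qed.

Lemma sat_cone x L e : sat_all x L -> cone L e -> sat x e.
Proof.
move=> hL; elim=> {e} [|c /hL|a b _ ha _ hb|k a k0 _ ha] //.
- by rewrite /sat lhs0 ffunE.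
- by rewrite /sat lhsD ffunE; exact: lerD.
- by rewrite /sat lhsZ ffunE; exact: ler_wpM2l.
Qed.

Lemma cone_coord0 (o : option J) L e : {in L, forall c, c o = 0} -> cone L e -> e o = 0.
Proof.
move=> hL; elim=> {e} [|c /hL|a b _ ha _ hb|k a k0 _ ha] //; rewrite ffunE //.
- by rewrite ha hb addr0.
- by rewrite ha scaler0.
Qed.

Section EliminationStep.
Variable i : J.

Definition pos_part L := [seq c : constraint <- L | 0 < c (Some i)].
Definition neg_part L := [seq c : constraint <- L | c (Some i) < 0].
Definition zero_part L := [seq c : constraint <- L | c (Some i) == 0].

Definition fm_comb (p n : constraint) : constraint := - n (Some i) *: p + p (Some i) *: n.
Definition fm_elim L := zero_part L ++ [seq fm_comb p n | p <- pos_part L, n <- neg_part L].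

Lemma fm_elim_cone L : {in fm_elim L, forall c, cone L c}.
Proof.
move=> c; rewrite mem_cat => /orP [|/allpairsP [[p n] /= [pP nN ->]]].
  by rewrite mem_filter => /andP [_ cL]; exact: cone_mem.
move: pP nN; rewrite !mem_filter => /andP [p0 pL] /andP [n0 nL].
apply: coneD; apply: coneZ; rewrite ?oppr_ge0 ?ltW //; exact: cone_mem.
Qed.

Lemma fm_elim_coord L : {in fm_elim L, forall c, c (Some i) = 0}.
Proof.
move=> c; rewrite mem_cat => /orP [|/allpairsP [[p n] /= [_ _ ->]]].
  by rewrite mem_filter => /andP [/eqP].
by rewrite ffunE !scale_coord; ring.
Qed.

Definition upd (x : J -> R) t j := if j == i then t else x j.
Definition rest x c := \sum_(j | j != i) c (Some j) * x j.
Definition bound x c := (c None - rest x c) / c (Some i).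

Lemma lhs_rest x c : lhs x c = c (Some i) * x i + rest x c.
Proof. exact: bigD1. Qed.

Lemma lhs_upd x t c : lhs (upd x t) c = c (Some i) * t + rest x c.
Proof.
rewrite lhs_rest /upd eqxx; congr (_ + _).
by apply: eq_bigr => j /negbTE ->.
Qed.

Lemma sat_upd_zero x t c : c (Some i) = 0 -> sat (upd x t) c = sat x c.
Proof. by move=> c0; rewrite /sat lhs_upd lhs_rest c0 !mul0r. Qed.

Lemma sat_upd_pos x t c : 0 < c (Some i) -> sat (upd x t) c = (t <= bound x c).
Proof. by move=> c0; rewrite /sat lhs_upd ler_pdivlMr // -lerBrDr mulrC. Qed.

Lemma sat_upd_neg x t c : c (Some i) < 0 -> sat (upd x t) c = (bound x c <= t).
Proof. by move=> c0; rewrite /sat lhs_upd ler_ndivrMr // -lerBrDr mulrC. Qed.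

Lemma bound_comb x p n : 0 < p (Some i) -> n (Some i) < 0 ->
  sat x (fm_comb p n) -> bound x n <= bound x p.
Proof.
move=> p0 n0; rewrite /sat lhsD !lhsZ !lhs_rest ffunE !scale_coord => hpn.
rewrite /bound ler_pdivlMr // mulrAC ler_ndivrMr //; nra.
Qed.

Lemma fm_elim_sat x L : sat_all x (fm_elim L) -> exists t, sat_all (upd x t) L.
Proof.
move=> hx.
have hnp : {in map (bound x) (neg_part L) & map (bound x) (pos_part L),
             forall u v : R, u <= v}.
  move=> _ _ /mapP [n nN ->] /mapP [p pP ->].
  move: (nN) (pP); rewrite !mem_filter => /andP [n0 _] /andP [p0 _].
  apply: bound_comb => //; apply: hx.
  by rewrite mem_cat; apply/orP; right; apply/allpairsP; exists (p, n).
have [t [tlo tup]] := exists_between hnp.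
exists t => c cL; case: (ltgtP (c (Some i)) 0) => hc.
- by rewrite sat_upd_neg //; apply: tlo; apply: map_f; rewrite mem_filter hc cL.
- by rewrite sat_upd_pos //; apply: tup; apply: map_f; rewrite mem_filter hc cL.
- by rewrite sat_upd_zero //; apply: hx; rewrite mem_cat mem_filter hc eqxx cL.
Qed.

End EliminationStep.

Lemma fm_elim_seq (S : seq J) L : exists L' : seq constraint,
  [/\ {in L', forall c, cone L c},
      {in L', forall c, forall j, j \in S -> c (Some j) = 0} &
      forall x, sat_all x L' ->
        exists2 x', sat_all x' L & forall j, j \notin S -> x' j = x j].
Proof.
elim: S L => [|i S IH] L.
  by exists L; split=> // [c cL|x hx]; [exact: cone_mem | exists x].
have [L' [hc hz hx]] := IH (fm_elim i L).
exists L'; split.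
- by move=> c /hc; apply: cone_trans; exact: fm_elim_cone.
- move=> c cL j; rewrite inE => /predU1P [->|]; last exact: hz.
  by apply: cone_coord0 (hc _ cL); exact: fm_elim_coord.
- move=> x /hx [x1 s1 ex1]; have [t ht] := fm_elim_sat s1.
  exists (upd i x1 t) => // j; rewrite inE negb_or => /andP [ji jS].
  by rewrite /upd (negbTE ji) ex1.
Qed.

End FourierMotzkin.

Lemma halfline_min (R : realFieldType) (s : seq (R * R)) t0 beta :
  {in s, forall q, q.1 * t0 <= q.2} ->
  (forall t, {in s, forall q, q.1 * t <= q.2} -> beta <= t) ->
  exists2 p, p \in s & p.1 < 0 /\ {in s, forall q, q.1 * (p.2 / p.1) <= q.2}.
Proof.
move=> ht0 hbeta; have [negs0|] := eqVneq [seq q <- s | q.1 < 0] [::].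
  have q_ge0 q : q \in s -> 0 <= q.1.
    move=> qs; rewrite leNgt; apply/negP => q0.
    by have := mem_filter (fun q => q.1 < 0) q s; rewrite negs0 q0 qs.
  have : beta <= Num.min t0 (beta - 1).
    apply: hbeta => q qs; apply: le_trans (ht0 q qs).
    by apply: ler_wpM2l; [exact: q_ge0 | rewrite ge_min lexx].
  by rewrite le_min => /andP [_]; lra.
move=> /(seq_argmax (fun q => q.2 / q.1)) [p]; rewrite mem_filter => /andP [p0 ps] hp.
exists p => //; split=> // q qs.
have [q0|q0] := ltP q.1 0.
  by rewrite mulrC -ler_ndivrMr //; apply: hp; rewrite mem_filter q0 qs.
apply: le_trans (ht0 q qs); apply: ler_wpM2l => //.
by rewrite ler_ndivrMr // mulrC; exact: ht0.
Qed.

Lemma sum_option (R : nmodType) (T : finType) (F : option T -> R) :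
  \sum_o F o = F None + \sum_t F (Some t).
Proof.
rewrite (bigD1 None) //= (reindex_omap Some id) //=; last by case.
by congr (_ + _); apply: eq_bigl => t; rewrite eqxx.
Qed.

Section LPDuality.
Variables (R : realFieldType) (J : finType).
Implicit Types (L : seq (constraint R J)) (a x : J -> R) (c d : constraint R (option J)).

Definition lift (c : constraint R J) : constraint R (option J) :=
  [ffun o => match o with
             | None => c None | Some None => 0 | Some (Some j) => c (Some j) end].

Definition unlift (c : constraint R (option J)) : constraint R J :=
  [ffun o => if o is Some j then c (Some (Some j)) else c None].

(* The inequality \sum_j a j * y (Some j) <= y None: the extra variable bounds the objective. *)
Definition epigraph a : constraint R (option J) :=
  [ffun o => match o with None => 0 | Some None => -1 | Some (Some j) => a j end].

Lemma lhs_option (y : option J -> R) (c : constraint R (option J)) :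
  lhs y c = c (Some None) * y None + \sum_j c (Some (Some j)) * y (Some j).
Proof. exact: sum_option. Qed.

Lemma sat_lift (y : option J -> R) (c : constraint R J) :
  sat y (lift c) = sat (fun j => y (Some j)) c.
Proof.
rewrite /sat lhs_option !ffunE mul0r add0r; congr (_ <= _).
by apply: eq_bigr => j _; rewrite ffunE.
Qed.

Lemma sat_epigraph (y : option J -> R) a :
  sat y (epigraph a) = (\sum_j a j * y (Some j) <= y None).
Proof.
rewrite /sat lhs_option !ffunE mulN1r addrC subr_le0.
by congr (_ <= _); apply: eq_bigr => j _; rewrite ffunE.
Qed.

Lemma unlift_lift : cancel lift unlift.
Proof. by move=> c; apply/ffunP => -[j|]; rewrite !ffunE. Qed.

Lemma unlift_linear k c d : unlift (k *: c + d) = k *: unlift c + unlift d.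
Proof. by apply/ffunP => -[j|]; rewrite !ffunE. Qed.

Lemma epigraph_projection L a : exists L' : seq (constraint R (option J)),
  [/\ {in L', forall c, cone (epigraph a :: map lift L) c},
      {in L', forall c j, c (Some (Some j)) = 0} &
      forall t, {in L', forall c, c (Some None) * t <= c None} <->
                exists2 x, sat_all x L & \sum_j a j * x j <= t].
Proof.
have [L' [hc hz hx]] := fm_elim_seq [seq Some j | j <- enum J] (epigraph a :: map lift L).
have sat_system y : sat_all y (epigraph a :: map lift L) <->
    sat_all (fun j => y (Some j)) L /\ \sum_j a j * y (Some j) <= y None.
  split=> [hy|[hy hobj] c].
    split; last by rewrite -sat_epigraph; apply: hy; exact: mem_head.
    by move=> c cL; rewrite -sat_lift; apply: hy; rewrite inE map_f ?orbT.
  rewrite inE => /predU1P [->|/mapP [d dL ->]]; first by rewrite sat_epigraph.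
  by rewrite sat_lift; exact: hy.
have lhsL' y c : c \in L' -> lhs y c = c (Some None) * y None.
  move=> cL; apply: lhs_single => -[j _|//].
  by apply: (hz _ cL); rewrite map_f ?mem_enum.
exists L'; split=> // [c cL j|t]; first by apply: (hz _ cL); rewrite map_f ?mem_enum.
split=> [ht|[x hxL hobj] c cL].
  have /hx [y /sat_system [hyL hobj] hyt] : sat_all (fun=> t) L'.
    by move=> c cL; rewrite /sat lhsL' //; exact: ht.
  exists (fun j => y (Some j)) => //; rewrite -(hyt None) //.
  by apply/mapP => -[].
pose y o := if o is Some j then x j else t.
have hy : sat_all y (epigraph a :: map lift L) by apply/sat_system.
by have := sat_cone hy (hc c cL); rewrite /sat lhsL'.
Qed.

Lemma epigraph_certificate L a c :
  cone (epigraph a :: map lift L) c -> (forall j, c (Some (Some j)) = 0) ->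
  c (Some None) < 0 ->
  exists2 u, cone L u & (forall j, u (Some j) = - a j) /\ u None = - (c None / c (Some None)).
Proof.
move=> /cone_cons [k k0 [v vL ->]] hj; rewrite !(scale_coord, ffunE).
have -> : v (Some None) = 0.
  by apply: cone_coord0 vL => _ /mapP [d _ ->]; rewrite ffunE.
rewrite add0r mulrN1 oppr_lt0 => kp.
exists (unlift (k^-1 *: v)).
  rewrite -(mapK unlift_lift L); apply: cone_linear; first exact: unlift_linear.
  by apply: coneZ vL; rewrite invr_ge0 ltW.
split=> [j|]; rewrite !(scale_coord, ffunE).
  have := hj j; rewrite !(scale_coord, ffunE) => /eqP; rewrite addr_eq0 => /eqP ->.
  by field; rewrite gt_eqF.
by rewrite mulr0 addr0; field; rewrite gt_eqF.
Qed.

Lemma cert_lower_bound L a m u x : cone L u -> (forall j, u (Some j) = - a j) ->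
  u None = - m -> sat_all x L -> m <= \sum_j a j * x j.
Proof.
move=> uL uj um /sat_cone /(_ uL); rewrite /sat um /lhs.
rewrite (eq_bigr (fun j => - (a j * x j))) => [|j _]; last by rewrite uj mulNr.
by rewrite sumrN lerN2.
Qed.

Theorem lp_duality L a beta :
  (exists x, sat_all x L) -> (forall x, sat_all x L -> beta <= \sum_j a j * x j) ->
  exists m, (exists2 x, sat_all x L & \sum_j a j * x j = m) /\
            exists2 u, cone L u & (forall j, u (Some j) = - a j) /\ u None = - m.
Proof.
move=> [x0 hx0] hbeta; have [L' [hc hz hproj]] := epigraph_projection L a.
pose s := [seq (c (Some None), c None) | c <- L'].
have admissible t : {in s, forall q, q.1 * t <= q.2} <->
    exists2 x, sat_all x L & \sum_j a j * x j <= t.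
  rewrite -hproj; split=> [h c cL|h _ /mapP [c cL ->]]; last exact: h.
  exact: (h _ (map_f _ cL)).
have ht0 : {in s, forall q, q.1 * (\sum_j a j * x0 j) <= q.2}.
  by apply/admissible; exists x0.
have hlow t : {in s, forall q, q.1 * t <= q.2} -> beta <= t.
  by move=> /admissible [x hx]; apply: le_trans (hbeta x hx).
have [_ /mapP [c cL ->] /= [c0 /admissible [x hx hobj]]] := halfline_min ht0 hlow.
have [u uL [uj um]] := epigraph_certificate (hc _ cL) (hz _ cL) c0.
exists (c None / c (Some None)); split; last by exists u.
by exists x => //; apply/le_anti; rewrite hobj (cert_lower_bound uL uj um hx).
Qed.

End LPDuality.

Lemma sum_indicator {R : numDomainType} (T : finType) (P : pred T) q :
  \sum_(p | P p) ((p == q)%:R : R) = (P q)%:R.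
Proof.
rewrite big_mkcond (bigD1 q) //= eqxx big1 ?addr0; first by case: (P q).
by move=> p /negbTE ->; case: (P p).
Qed.

Lemma max_over_exists (R : realFieldType) (T : finType) (P : T -> R -> Prop) :
  (0 < #|T|)%N -> (forall t, exists v, P t v) ->
  (forall t u v, P t u -> P t v -> u = v) -> exists v, max_over_z P v.
Proof.
move=> /card_gt0P [t0 _] hex huniq.
suff [t [v [hv hmax]]] : exists t v, P t v /\ forall t' u, t' \in enum T -> P t' u -> u <= v.
  by exists v; split; [exists t | move=> t' u; apply: hmax; rewrite mem_enum].
elim: (enum T) => [|t s [t1 [v1 [hv1 hmax]]]]; first by have [v hv] := hex t0; exists t0, v.
have [vt hvt] := hex t; have [vt_le|v1_lt] := leP vt v1.
  exists t1, v1; split=> // t' u; rewrite inE => /predU1P [-> /(huniq _ _ _ hvt) <-//|].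
  exact: hmax.
exists t, vt; split=> // t' u; rewrite inE => /predU1P [-> /(huniq _ _ _ hvt) <-//|ts].
by move=> /(hmax _ _ ts) hu; exact: le_trans hu (ltW v1_lt).
Qed.

Section RectangleLP.
Variables (R : realFieldType) (X Y Z : finType) (f : X -> Y -> Z) (eps delta : R).
Implicit Types (w : weights R X Y) (z : Z) (mu nu : {ffun X * Y -> R}).

Definition ineq (a : rect X Y -> R) (b : R) : constraint R (rect X Y) :=
  [ffun o => if o is Some r then a r else b].

Definition incid (p : X * Y) (r : rect X Y) : R := ((p.1 \in r.1) && (p.2 \in r.2))%:R.

Definition fiber z : {pred X * Y} := [pred p | f p.1 p.2 == z].

Definition nonneg_cstr := [seq ineq (fun r => - (r == r0)%:R) 0 | r0 : rect X Y].
Definition packing_cstr z := [seq ineq (incid p) delta | p in [predC fiber z]].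
Definition capacity_cstr := [seq ineq (incid p) 1 | p : X * Y].
Definition box_cstr z := nonneg_cstr ++ packing_cstr z ++ capacity_cstr.

Definition covering_at p := ineq (fun r => - incid p r) (- (1 - eps)).
Definition covering_cstr z := [seq covering_at p | p in fiber z].
Definition avg_covering mu z :=
  ineq (fun r => - \sum_(p | f p.1 p.2 == z) mu p * incid p r)
       (- ((1 - eps) * \sum_(p | f p.1 p.2 == z) mu p)).

Lemma sat_ineq w a b : sat w (ineq a b) = (\sum_r a r * w r <= b).
Proof. by rewrite /sat /lhs ffunE; congr (_ <= _); apply: eq_bigr => r _; rewrite ffunE. Qed.

Lemma sum_incid p w : \sum_r incid p r * w r = cov w p.1 p.2.
Proof.
rewrite /cov [RHS]big_mkcond; apply: eq_bigr => r _ /=.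
by rewrite /incid; case: ifP; rewrite ?mul1r ?mul0r.
Qed.

Lemma sum_neg_incid p w : \sum_r - incid p r * w r = - cov w p.1 p.2.
Proof. by rewrite -sum_incid -sumrN; apply: eq_bigr => r _; rewrite mulNr. Qed.

Lemma sat_box w z : sat_all w (box_cstr z) <->
  [/\ forall r, 0 <= w r, forall x y, f x y <> z -> cov w x y <= delta
    & forall x y, cov w x y <= 1].
Proof.
rewrite !sat_all_cat !sat_all_image.
have nonneg r0 : sat w (ineq (fun r => - (r == r0)%:R) 0) = (0 <= w r0).
  rewrite sat_ineq (eq_bigr (fun r => - ((r == r0)%:R * w r))) => [|r _]; last by rewrite mulNr.
  rewrite sumrN oppr_le0 (bigD1 r0) //= eqxx mul1r big1 ?addr0 // => r /negbTE ->.
  by rewrite mul0r.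
split=> [[hn [hp hc]]|[hn hp hc]]; split.
- by move=> r; rewrite -nonneg; exact: hn.
- move=> x y /eqP fxy; have := hp (x, y); rewrite sat_ineq sum_incid; apply.
  by rewrite inE /= inE fxy.
- by move=> x y; have := hc (x, y); rewrite sat_ineq sum_incid; exact.
- by move=> r _; rewrite nonneg.
- split=> [[x y]|[x y] _]; rewrite sat_ineq sum_incid; last exact: hc.
  by rewrite !inE => /eqP; exact: hp.
Qed.

Lemma feas_zE w z : feas_z f eps delta z w <-> sat_all w (covering_cstr z ++ box_cstr z).
Proof.
rewrite sat_all_cat sat_box sat_all_image.
have hcov : {in fiber z, forall p, sat w (covering_at p)} <->
    (forall x y, f x y = z -> 1 - eps <= cov w x y).
  split=> [h x y /eqP fxy|h [x y] /eqP fxy].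
    by have := h (x, y) fxy; rewrite sat_ineq sum_neg_incid lerN2.
  by rewrite sat_ineq sum_neg_incid lerN2; exact: h.
by split=> [[h0 /hcov h1 h2 h3]|[/hcov h1 [h0 h2 h3]]]; split.
Qed.

Lemma feas_zmuE w mu z :
  feas_zmu f eps delta mu z w <-> sat_all w (avg_covering mu z :: box_cstr z).
Proof.
rewrite sat_all_cons sat_box sat_ineq.
rewrite (eq_bigr (fun r => - \sum_(p | f p.1 p.2 == z) mu p * (incid p r * w r))); last first.
  by move=> r _; rewrite mulNr mulr_suml; congr (- _); apply: eq_bigr => p _; rewrite mulrA.
rewrite sumrN exchange_big lerN2 /=.
under [X in _ <= X]eq_bigr => p _ do rewrite -mulr_sumr sum_incid.
by split=> [[h0 h1 h2 h3]|[h1 [h0 h2 h3]]]; split.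
Qed.

Lemma cone_covering z e : cone (covering_cstr z) e ->
  exists2 nu : {ffun X * Y -> R}, forall p, 0 <= nu p & e = avg_covering nu z.
Proof.
move=> /cone_image [g [g0 gP ->]].
exists [ffun p => g p] => [p|]; first by rewrite ffunE.
have fiber_sum (F : X * Y -> R) :
    \sum_p g p * F p = \sum_(p | f p.1 p.2 == z) [ffun p => g p] p * F p.
  rewrite [RHS]big_mkcond; apply: eq_bigr => p _; rewrite ffunE.
  by case: ifP => // pz; rewrite gP ?mul0r // inE /= pz.
apply/ffunP => -[r|]; rewrite sum_ffunE ffunE; under eq_bigr do rewrite scale_coord ffunE.
  by rewrite -fiber_sum -sumrN; apply: eq_bigr => p _; rewrite mulrN.
by rewrite (fiber_sum (fun=> - (1 - eps))) -mulr_suml mulrN mulrC.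
Qed.

Lemma avg_coveringZ nu mu k z : (forall p, nu p = k * mu p) ->
  avg_covering nu z = k *: avg_covering mu z.
Proof.
move=> hnu; apply/ffunP => -[r|]; rewrite scale_coord !ffunE.
  by rewrite mulrN mulr_sumr; congr (- _); apply: eq_bigr => p _; rewrite hnu mulrA.
by rewrite (eq_bigr (fun p => k * mu p)) // -mulr_sumr; ring.
Qed.

Lemma distr_of_nonneg nu : (0 < #|{: X * Y}|)%N -> (forall p, 0 <= nu p) ->
  exists2 mu : {ffun X * Y -> R}, is_distr mu & exists2 k, 0 <= k & forall p, nu p = k * mu p.
Proof.
move=> hXY nu0; have [M0|M0] := eqVneq (\sum_p nu p) 0.
  exists [ffun=> #|{: X * Y}|%:R^-1]; last first.
    by exists 0 => // p; rewrite mul0r; exact: (psumr_eq0P (fun p _ => nu0 p) M0).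
  split=> [p|]; first by rewrite ffunE invr_ge0 ler0n.
  under eq_bigr do rewrite ffunE.
  by rewrite sumr_const -[_ *+ _]mulr_natl divff // pnatr_eq0 -lt0n.
have Mp : 0 < \sum_p nu p by rewrite lt_def M0 sumr_ge0.
exists [ffun p => nu p / \sum_p nu p].
  split=> [p|]; first by rewrite ffunE divr_ge0 // ltW.
  by under eq_bigr do rewrite ffunE; rewrite -mulr_suml divff.
by exists (\sum_p nu p); [exact: ltW | move=> p; rewrite ffunE mulrC divfK].
Qed.

Definition point_rect (p : X * Y) : rect X Y := ([set p.1], [set p.2]).

Definition point_weights z : weights R X Y :=
  [ffun r => \sum_(p | f p.1 p.2 == z) (r == point_rect p)%:R].

Lemma cov_point_weights z x y : cov (point_weights z) x y = (f x y == z)%:R.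
Proof.
rewrite /cov; under eq_bigr do rewrite ffunE.
rewrite exchange_big /= (eq_bigr (fun p => (p == (x, y))%:R)).
  by rewrite (sum_indicator (fun p : X * Y => f p.1 p.2 == z)).
move=> [x' y'] _; rewrite (sum_indicator (fun r : rect X Y => (x \in r.1) && (y \in r.2))) /=.
by rewrite !in_set1 xpair_eqE (eq_sym x) (eq_sym y).
Qed.

Lemma point_weights_feas z : 0 <= eps -> 0 <= delta -> feas_z f eps delta z (point_weights z).
Proof.
move=> eps0 delta0; split=> [r|x y fxy|x y /eqP/negbTE fxy|x y]; rewrite ?cov_point_weights.
- by rewrite ffunE; apply: sumr_ge0 => p _; exact: ler0n.
- by rewrite fxy eqxx gerBl.
- by rewrite fxy.
- by case: (_ == _).
Qed.

Lemma feas_z_zmu mu z w : (forall p, 0 <= mu p) ->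
  feas_z f eps delta z w -> feas_zmu f eps delta mu z w.
Proof.
move=> mu0 [h0 hcov hpack hcap]; split=> //.
rewrite mulr_sumr; apply: ler_sum => p /eqP fp.
by rewrite mulrC; apply: ler_wpM2l => //; exact: hcov.
Qed.

Lemma lp_opt_unique (P : weights R X Y -> Prop) u v : lp_opt P u -> lp_opt P v -> u = v.
Proof. by move=> [[wu pu <-] hu] [[wv pv <-] hv]; apply: le_anti; rewrite hu // hv. Qed.

Lemma cost_lower_bound (L : seq (constraint R (rect X Y))) m u w : cone L u ->
  (forall r, u (Some r) = -1) -> u None = - m -> sat_all w L -> m <= cost w.
Proof.
move=> uL ur um hw; have := cert_lower_bound (a := fun=> 1) uL _ um hw.
rewrite /cost; under [X in _ <= X]eq_bigr do rewrite mul1r; apply.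
by move=> r; rewrite ur.
Qed.

Lemma lp_opt_of_cstr (L : seq (constraint R (rect X Y))) (P : weights R X Y -> Prop) :
  (forall w, P w <-> sat_all w L) -> (exists w, P w) ->
  (forall w, P w -> forall r, 0 <= w r) ->
  exists m, lp_opt P m /\
    exists2 u, cone L u & (forall r, u (Some r) = -1) /\ u None = - m.
Proof.
move=> hP [w0 /hP hw0] hpos.
have hffun x : sat_all x L -> P [ffun r => x r].
  by move=> hx; apply/hP => c /hx; rewrite sat_ffun.
have obj_ge0 x : sat_all x L -> 0 <= \sum_r 1 * x r.
  move=> /hffun /hpos x0; apply: sumr_ge0 => r _.
  by have := x0 r; rewrite ffunE mul1r.
have [m [[x hx hxm] [u uL [ur um]]]] :=
  lp_duality (ex_intro (fun x : rect X Y -> R => sat_all x L) _ hw0) obj_ge0.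
exists m; split; last by exists u => //; split=> // r; rewrite ur.
split; last by move=> w /hP; apply: cost_lower_bound uL _ um => r; rewrite ur.
exists [ffun r => x r]; first exact: hffun.
by rewrite -hxm; apply: eq_bigr => r _; rewrite ffunE mul1r.
Qed.

Hypotheses (eps_ge0 : 0 <= eps) (delta_ge0 : 0 <= delta).

Lemma srec_z_certificate z : exists m, srec_z f eps delta z m /\
  exists2 u, cone (covering_cstr z ++ box_cstr z) u &
             (forall r, u (Some r) = -1) /\ u None = - m.
Proof.
apply: lp_opt_of_cstr => [w|| w []//]; first exact: feas_zE.
by exists (point_weights z); exact: point_weights_feas.
Qed.

Lemma srec_zmu_exists mu z : (forall p, 0 <= mu p) -> exists m, srec_zmu f eps delta mu z m.
Proof.
move=> mu0; have [||m [hm _]] := lp_opt_of_cstr (fun w => feas_zmuE w mu z).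
- by exists (point_weights z); apply: feas_z_zmu => //; exact: point_weights_feas.
- by move=> w [].
by exists m.
Qed.

Lemma srec_zmu_le_srec_z mu z u m : (forall p, 0 <= mu p) ->
  srec_zmu f eps delta mu z u -> srec_z f eps delta z m -> u <= m.
Proof. by move=> mu0 [_ hu] [[w hw <-] _]; apply: hu; exact: feas_z_zmu. Qed.

Lemma srec_zmu_dual z m : (0 < #|{: X * Y}|)%N -> srec_z f eps delta z m ->
  exists2 mu, is_distr mu & srec_zmu f eps delta mu z m.
Proof.
move=> hXY hm; have [m' [hm' [u uL [ur um]]]] := srec_z_certificate z.
rewrite -(lp_opt_unique hm' hm).
have [e1 /cone_covering [nu nu0 e1E] [e2 e2L ue]] := cone_cat uL.
have [mu hmu [k k0 hk]] := distr_of_nonneg hXY nu0.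
have mu0 : forall p, 0 <= mu p by case: hmu.
have u_avg : cone (avg_covering mu z :: box_cstr z) u.
  rewrite ue e1E (avg_coveringZ _ hk); apply: coneD.
    by apply: coneZ (cone_mem (mem_head _ _)).
  by apply: cone_trans e2L => c cL; apply: cone_mem; rewrite inE cL orbT.
have [mu_opt hmu_opt] := srec_zmu_exists z mu0.
exists mu => //; suff -> : m' = mu_opt by [].
apply: le_anti; rewrite (srec_zmu_le_srec_z mu0 hmu_opt hm') andbT.
case: hmu_opt => -[w /feas_zmuE hw <-] _.
exact: cost_lower_bound u_avg ur um hw.
Qed.

Lemma srec_zmu_le_srec mu z u v : (forall p, 0 <= mu p) ->
  srec f eps delta v -> srec_zmu f eps delta mu z u -> u <= v.
Proof.
move=> mu0 [_ hv] hu; have [m [hm _]] := srec_z_certificate z.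
exact: le_trans (srec_zmu_le_srec_z mu0 hu hm) (hv _ _ hm).
Qed.

End RectangleLP.

Theorem mainTheorem3 (R : realFieldType) (X Y Z : finType) (f : X -> Y -> Z)
    (eps delta : R) :
  (0 < #|X|)%N -> (0 < #|Y|)%N ->
  0 < eps < 1 -> 0 < delta < 1 ->
  exists v : R,
    srec f eps delta v /\
    (forall mu, is_distr mu -> exists u, srec_mu f eps delta mu u) /\
    max_over_distr f eps delta v.
Proof.
move=> /card_gt0P [x0 _] /card_gt0P [y0 _] /andP [/ltW eps0 _] /andP [/ltW delta0 _].
have hXY : (0 < #|{: X * Y}|)%N by apply/card_gt0P; exists (x0, y0).
have hZ : (0 < #|Z|)%N by apply/card_gt0P; exists (f x0 y0).
have [v hv] : exists v, srec f eps delta v.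
  apply: max_over_exists hZ _ (fun z => @lp_opt_unique _ _ _ _) => z.
  by have [m [hm _]] := srec_z_certificate f eps0 delta0 z; exists m.
exists v; split=> //; split.
  move=> mu [mu0 _]; apply: max_over_exists hZ _ (fun z => @lp_opt_unique _ _ _ _) => z.
  exact: srec_zmu_exists.
have [[zs hzs] _] := hv; have [mu hmu hmu_zs] := srec_zmu_dual eps0 delta0 hXY hzs.
split; last by move=> mu' u [mu'0 _] [[z hz] _]; exact: srec_zmu_le_srec hv hz.
exists mu => //; split; first by exists zs.
by move=> z u; apply: srec_zmu_le_srec hv; case: hmu.
Qed.
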